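(* Let $\{\emptyset,\Omega\}=\mathcal{F}_0\subseteq\cdots\subseteq\mathcal{F}_n$ be $\sigma$-fields on a probability space and let $(\xi_i,\mathcal{F}_i)_{i=1,\dots,n}$ be supermartingale differences (each $\xi_i$ is $\mathcal{F}_i$-measurable, integrable, with $\mathbf{E}(\xi_i\mid\mathcal{F}_{i-1})\le0$). Suppose $\mathbf{E}|\xi_i|^\beta<\infty$ for a constant $\beta\in(1,2)$. Then for all $\lambda>0$, \[ \mathbf{E}\Big(\exp\big\{\lambda\xi_i-\lambda^\beta(\xi_i^+)^\beta\big\}\,\Big|\,\mathcal{F}_{i-1}\Big)\le\exp\Big\{\lambda^\beta\,\mathbf{E}\big((\xi_i^-)^\beta\mid\mathcal{F}_{i-1}\big)\Big\}, \] where $x^+=\max\{x,0\}$ and $x^-=-\min\{x,0\}$. *)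

From HB Require Import structures.
From mathcomp Require Import all_boot all_order all_algebra.
From mathcomp Require Import all_classical all_reals all_analysis.
Set Implicit Arguments. Unset Strict Implicit. Unset Printing Implicit Defensive.
Import Order.TTheory GRing.Theory Num.Theory.
Local Open Scope classical_set_scope.
Local Open Scope ring_scope.

Definition sub_sigma d (T : measurableType d) (G : set (set T)) : Prop :=
  sigma_algebra setT G /\ G `<=` measurable.

Definition G_measurable d (T : measurableType d) (R : realType)
  (G : set (set T)) (f : T -> R) : Prop :=
  forall B : set R, measurable B -> G (f @^-1` B).

Definition cond_exp d (T : measurableType d) (R : realType)
  (P : probability T R) (G : set (set T)) (f g : T -> R) : Prop :=
  [/\ G_measurable G g, P.-integrable setT (EFin \o g) &
      forall A, G A -> (\int[P]_(x in A) (g x)%:E = \int[P]_(x in A) (f x)%:E)%E].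

From HB Require Import structures.
From mathcomp Require Import all_boot all_order all_algebra.
From mathcomp Require Import all_classical all_reals all_analysis.
From mathcomp Require Import measurable_realfun ring lra.
Import Order.TTheory GRing.Theory Num.Theory.
Local Open Scope classical_set_scope.
Local Open Scope ring_scope.

(* For z >= 0 and 1 <= b <= 2 one has exp(-z) <= 1 - z + z^b and
   exp(z - z^b) <= 1 + z (compare z^b with z^2 below 1 and with z above 1),
   which combine into the pointwise bound
     exp(l x - l^b (x^+)^b) <= 1 + l x + l^b (x^-)^b.
   Integrating it over a set A of the sub-sigma-field G and replacing x and
   (x^-)^b by their conditional expectations, the supermartingale condition
   kills the linear term: the integrals over A of E(exp(...) | G) are at most
   those of 1 + l^b E((x^-)^b | G).  Both functions being G-measurable, this
   holds almost surely, and 1 + y <= exp y concludes. *)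

Section elementary_inequalities.
Variable R : realType.
Implicit Types b l w x z : R.

Lemma expR_mul_subr_le1 w : expR w * (1 - w) <= 1.
Proof.
have e : expR w * expR (- w) = 1 by rewrite -expRD subrr expR0.
by rewrite -[leRHS]e ler_wpM2l ?expR_ge0 // expR_ge1Dx.
Qed.

Let cubic_factor z : (1 + z) * (1 - z + z ^+ 2) = 1 + z ^+ 3.
Proof. by ring. Qed.

Lemma expRN_le_quadratic z : 0 <= z -> expR (- z) <= 1 - z + z ^+ 2.
Proof.
move=> z0; have z1 : 0 < 1 + z by lra.
rewrite -(ler_pM2l z1) cubic_factor mulrC.
have := expR_mul_subr_le1 (- z); rewrite opprK.
have : 0 <= z ^+ 3 by rewrite exprn_ge0.
lra.
Qed.

Lemma expR_sub_sqr_le z : 0 <= z -> expR (z - z ^+ 2) <= 1 + z.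
Proof.
move=> z0; have q0 : 0 < 1 - z + z ^+ 2 by nra.
rewrite -(ler_pM2r q0) cubic_factor.
have := expR_mul_subr_le1 (z - z ^+ 2).
have : 0 <= z ^+ 3 by rewrite exprn_ge0.
have -> : 1 - (z - z ^+ 2) = 1 - z + z ^+ 2 by ring.
lra.
Qed.

Lemma sqr_le_powR b z : b <= 2 -> 0 <= z <= 1 -> z ^+ 2 <= z `^ b.
Proof.
move=> b2 /andP[z0 z1]; have [->|zn0] := eqVneq z 0.
  by rewrite expr0n powR_ge0.
rewrite -powR_mulrn //; apply: ger_powR => //.
by rewrite z1 lt_neqAle eq_sym zn0 z0.
Qed.

Lemma expRN_le_powR b z : 1 <= b <= 2 -> 0 <= z -> expR (- z) <= 1 - z + z `^ b.
Proof.
move=> /andP[b1 b2] z0; have [z1|z1] := leP z 1.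
  have : z ^+ 2 <= z `^ b by rewrite sqr_le_powR ?z0.
  have := expRN_le_quadratic z z0; lra.
have zb := le1r_powR (ltW z1) b1.
have : expR (- z) <= 1 by rewrite expR_le1; lra.
lra.
Qed.

Lemma expR_sub_powR_le b z : 1 <= b <= 2 -> 0 <= z -> expR (z - z `^ b) <= 1 + z.
Proof.
move=> /andP[b1 b2] z0; have [z1|z1] := leP z 1.
  have : z ^+ 2 <= z `^ b by rewrite sqr_le_powR ?z0.
  by move=> h; apply: le_trans (expR_sub_sqr_le z z0); rewrite ler_expR; lra.
have zb := le1r_powR (ltW z1) b1.
have : expR (z - z `^ b) <= 1 by rewrite expR_le1; lra.
lra.
Qed.

Lemma expR_sub_powR_maxr_le b l x : 1 <= b <= 2 -> 0 <= l ->
  expR (l * x - l `^ b * Num.max x 0 `^ b) <=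
  1 + l * x + l `^ b * (- Num.min x 0) `^ b.
Proof.
move=> b12 l0; have b0 : b != 0 by case/andP: b12 => b1 _; apply/eqP; lra.
have [x0|x0] := leP 0 x.
  rewrite oppr0 powR0 // mulr0 addr0 -powRM //.
  by apply: expR_sub_powR_le; rewrite ?mulr_ge0.
rewrite powR0 // mulr0 subr0 -powRM // ?oppr_ge0 ?(ltW x0) //.
have lx0 : 0 <= l * - x by rewrite mulr_ge0 // oppr_ge0 ltW.
by have := expRN_le_powR _ _ b12 lx0; rewrite mulrN opprK.
Qed.

End elementary_inequalities.

Section sub_sigma_measurability.
Context {d : measure_display} {T : measurableType d} {R : realType}.
Context {G : set (set T)} (sG : sub_sigma G).

Lemma sub_sigma_measurable A : G A -> measurable A.
Proof. by case: sG => _; apply. Qed.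

Lemma G_measurable_fun (f : T -> R) : G_measurable G f -> measurable_fun setT f.
Proof. by move=> Gf _ B mB; rewrite setTI; exact/sub_sigma_measurable/Gf. Qed.

Lemma G_measurable_comp (f : T -> R) (phi : R -> R) :
  measurable_fun setT phi -> G_measurable G f -> G_measurable G (phi \o f).
Proof.
move=> mphi Gf B mB; rewrite comp_preimage.
by have := mphi measurableT B mB; rewrite setTI => /Gf.
Qed.

(* Since G is a sigma-algebra, G-measurability is measurability for the
   measurable structure generated by G, which is closed under subtraction. *)
Lemma G_measurableE (f : T -> R) :
  G_measurable G f <-> measurable_fun (setT : set (g_sigma_algebraType G)) f.
Proof.
have GE : G.-sigma.-measurable = G by case: sG => sigG _; exact: measurable_g_measurableTypeE.
split => [Gf _ B mB|mf B mB]; first by rewrite setTI GE; exact: Gf.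
by have := mf measurableT B mB; rewrite setTI GE.
Qed.

Lemma G_measurable_lt (u v : T -> R) :
  G_measurable G u -> G_measurable G v -> G [set x | u x < v x].
Proof.
move=> /G_measurableE mu /G_measurableE mv.
have /G_measurableE Gvu := measurable_funB mv mu.
have := Gvu _ (measurable_itv `]0, +oo[).
congr G; apply/seteqP; split => x /=; by rewrite in_itv /= andbT subr_gt0.
Qed.

End sub_sigma_measurability.

Section integral_sign.
Context {d : measure_display} {T : measurableType d} {R : realType}.
Variable mu : {measure set T -> \bar R}.
Local Open Scope ereal_scope.

Lemma measure0_integral_le0 (A : set T) (f : T -> R) :
  measurable A -> measurable_fun A f -> (forall x, A x -> (0 < f x)%R) ->
  \int[mu]_(x in A) (f x)%:E <= 0 -> mu A = 0.
Proof.
move=> mA mf f0 intf.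
have mEf : measurable_fun A (EFin \o f) by exact/measurable_EFinP.
have : \int[mu]_(x in A) `|(EFin \o f) x| = 0.
  apply/eqP; rewrite eq_le integral_ge0 ?andbT; last by move=> x _; exact: abse_ge0.
  rewrite (eq_integral (fun x => (f x)%:E)) // => x /[!inE] Ax.
  by rewrite /= ger0_norm // ltW // f0.
move=> /(ae_eq_integral_abs mu mA mEf) [N [mN N0 fN]].
apply/eqP; rewrite -measure_le0 -N0 le_measure ?inE //.
move=> x Ax; apply: fN => /(_ Ax) [] /eqP.
by rewrite gt_eqF // f0.
Qed.

Lemma integral_le0_ae (A : set T) (f : T -> R) :
  measurable A -> measurable_fun A f -> {ae mu, forall x, (f x <= 0)%R} ->
  \int[mu]_(x in A) (f x)%:E <= 0.
Proof.
move=> mA mf f_le0.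
have mmin : measurable_fun A (fun x => Num.min (f x) 0%R).
  exact: measurable_minr mf (measurable_cst _).
rewrite (ae_eq_integral (fun x => (Num.min (f x) 0%R)%:E)) //;
  [|exact/measurable_EFinP..|].
- rewrite (eq_integral (fun x => - (Num.max (- f x) 0%R)%:E)); last first.
    by move=> x _; rewrite -EFinN oppr_max opprK oppr0.
  by rewrite integral_ge0N ?oppe_le0 ?integral_ge0 // => x _; rewrite lee_fin le_max lexx orbT.
- apply: filterS f_le0 => x fx0 _.
  by congr EFin; apply/esym/min_idPl.
Qed.

End integral_sign.

Lemma sub_sigma_ae_le d (T : measurableType d) (R : realType)
    (mu : {measure set T -> \bar R}) (G : set (set T)) (u v : T -> R) :
  sub_sigma G -> G_measurable G u -> G_measurable G v ->
  mu.-integrable setT (EFin \o u) -> mu.-integrable setT (EFin \o v) ->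
  (forall A, G A -> (\int[mu]_(x in A) (u x)%:E <= \int[mu]_(x in A) (v x)%:E)%E) ->
  {ae mu, forall x, u x <= v x}.
Proof.
move=> sG Gu Gv iu iv le_uv; set A := [set x | v x < u x].
have GA : G A by exact: G_measurable_lt.
have mA : measurable A by exact: sub_sigma_measurable GA.
exists A; split => // [|x /negP]; last by rewrite -ltNge.
apply: (@measure0_integral_le0 _ _ _ _ _ (u \- v)) => //.
- have mu' := G_measurable_fun sG _ Gu; have mv' := G_measurable_fun sG _ Gv.
  by apply: measurable_funB; apply: (measurable_funS measurableT).
- by move=> x; rewrite /= subr_gt0.
- rewrite (eq_integral (fun x => (u x)%:E - (v x)%:E)%E) // integralB_EFin //.
    by rewrite sube_le0 le_uv.
  + exact: integrableS iu.
  + exact: integrableS iv.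
Qed.

Section affine_integral.
Context {d : measure_display} {T : measurableType d} {R : realType}.
Context (mu : {finite_measure set T -> \bar R}) {A : set T} (mA : measurable A).
Context (a b : R) {f : T -> R} (intf : mu.-integrable A (EFin \o f)).

Lemma integrable_affine : mu.-integrable A (fun x => (a + b * f x)%:E).
Proof.
have := integrableD mA (finite_measure_integrable_cst _ a mA) (integrableZl mA b intf).
by apply: eq_integrable => // x _; rewrite /= EFinD.
Qed.

Lemma integral_affine :
  (\int[mu]_(x in A) (a + b * f x)%:E = a%:E * mu A + b%:E * \int[mu]_(x in A) (f x)%:E)%E.
Proof.
have intbf : mu.-integrable A (EFin \o (fun x => b * f x)).
  by have := integrableZl mA b intf.
rewrite -integral_cst // -(integralZl mA intf).
rewrite -(integralD_EFin mA (finite_measure_integrable_cst _ _ mA) intbf).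
by apply: eq_integral => x _; rewrite /= EFinD.
Qed.

End affine_integral.

Lemma integrable_powR_neg_part d (T : measurableType d) (R : realType)
    (mu : {measure set T -> \bar R}) (X : T -> R) (b : R) :
  0 <= b -> measurable_fun setT X ->
  (\int[mu]_x (`|X x| `^ b)%:E < +oo)%E ->
  mu.-integrable setT (fun x => ((- Num.min (X x) 0) `^ b)%:E).
Proof.
move=> b0 mX fin_mom.
have mY : measurable_fun setT (fun x => (- Num.min (X x) 0) `^ b).
  apply: (measurableT_comp (measurable_powR b)).
  exact: measurable_funN (measurable_minr mX (measurable_cst _)).
apply/integrableP; split; first exact/measurable_EFinP.
apply: le_lt_trans fin_mom; apply: ge0_le_integral => //.
- by apply: measurableT_comp => //; exact/measurable_EFinP.
- apply/measurable_EFinP; apply: (measurableT_comp (measurable_powR b)).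
  by apply: measurableT_comp => //; exact: normr_measurable.
- move=> x _; rewrite /= ger0_norm ?powR_ge0 // lee_fin.
  apply: ge0_ler_powR; rewrite ?nnegrE ?oppr_ge0 ?ge_min ?lexx ?orbT //.
  by case: (leP (X x) 0) => hx; rewrite ?oppr0 // ler0_norm.
Qed.

Section supermartingale_difference.
Context {d : measure_display} {T : measurableType d} {R : realType}.
Variables (P : probability T R) (G : set (set T)) (X g1 : T -> R) (b lam : R).
Hypotheses (sG : sub_sigma G) (intX : P.-integrable setT (EFin \o X)).
Hypotheses (condX : cond_exp P G X g1) (g1_le0 : {ae P, forall x, g1 x <= 0}).
Hypotheses (b12 : 1 <= b <= 2) (lam0 : 0 <= lam).
Hypothesis momX : (\int[P]_x (`|X x| `^ b)%:E < +oo)%E.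

Let mX : measurable_fun setT X.
Proof. by apply/measurable_EFinP; exact: measurable_int intX. Qed.

Lemma integral_expR_le_affine (h : T -> R) (A : set T) :
  cond_exp P G (fun x => (- Num.min (X x) 0) `^ b) h -> G A ->
  (\int[P]_(x in A) (expR (lam * X x - lam `^ b * Num.max (X x) 0 `^ b))%:E <=
   \int[P]_(x in A) (1 + lam `^ b * h x)%:E)%E.
Proof.
move=> [_ ih int_h] GA; have mA := sub_sigma_measurable sG _ GA.
set Y := fun x => (- Num.min (X x) 0) `^ b.
have iY : P.-integrable A (EFin \o Y).
  apply: (integrableS measurableT mA) => //; apply: integrable_powR_neg_part mX momX.
  by case/andP: b12 => b1 _; lra.
have iX : P.-integrable A (EFin \o X) by exact: integrableS intX.
have ig1 : P.-integrable A (EFin \o g1).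
  by case: condX => _ ig1 _; exact: integrableS ig1.
have ihA : P.-integrable A (EFin \o h) by exact: integrableS ih.
have iR : P.-integrable A (fun x => (1 + lam `^ b * Y x)%:E).
  exact: integrable_affine.
have ilX : P.-integrable A (EFin \o (fun x => lam * X x)).
  by have := integrableZl mA lam iX.
apply: (@le_trans _ _ (\int[P]_(x in A) ((1 + lam `^ b * Y x) + lam * X x)%:E)%E).
  apply: ge0_le_integral => //.
  - apply/measurable_EFinP; apply: (measurable_funS measurableT) => //.
    apply: measurableT_comp => //; apply: measurable_funB.
      exact: measurable_funM.
    apply: measurable_funM => //.
    exact: measurableT_comp (measurable_powR _) (measurable_maxr mX (measurable_cst _)).
  - by apply/measurable_EFinP/measurable_funD; apply/measurable_EFinP;
      [exact: measurable_int iR|exact: measurable_int ilX].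
  - by move=> x _; rewrite lee_fin addrAC expR_sub_powR_maxr_le.
rewrite (integralD_EFin mA iR ilX) /comp.
rewrite (integral_affine P mA 1 _ iY) -int_h // -(integral_affine P mA 1 _ ihA).
under eq_integral do rewrite EFinM.
case: condX => _ _ int_g1; rewrite (integralZl mA iX) -int_g1 //.
rewrite geeDl // mule_ge0_le0 ?lee_fin // integral_le0_ae //.
by apply/measurable_EFinP; exact: measurable_int ig1.
Qed.

Lemma cond_exp_expR_le (g h : T -> R) :
  cond_exp P G (fun x => expR (lam * X x - lam `^ b * Num.max (X x) 0 `^ b)) g ->
  cond_exp P G (fun x => (- Num.min (X x) 0) `^ b) h ->
  {ae P, forall x, g x <= expR (lam `^ b * h x)}.
Proof.
move=> [Gg ig int_g] condY; have [Gh ih _] := condY.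
have le_affine : {ae P, forall x, g x <= 1 + lam `^ b * h x}.
  apply: sub_sigma_ae_le sG Gg _ ig _ _.
  - have mphi : measurable_fun setT (fun y : R => 1 + lam `^ b * y).
      by apply: measurable_funD => //; exact: measurable_funM.
    exact: G_measurable_comp mphi Gh.
  - exact: integrable_affine.
  - by move=> A GA; rewrite int_g //; exact: integral_expR_le_affine.
apply: filterS le_affine => x /le_trans; apply.
exact: expR_ge1Dx.
Qed.

End supermartingale_difference.

Theorem lemma5p1 (d : measure_display) (T : measurableType d) (R : realType)
  (P : probability T R) (n : nat) (F : nat -> set (set T)) (xi : nat -> T -> R)
  (beta : R) :
  F 0%N = [set A | A = set0 \/ A = setT] ->
  (forall i, (i <= n)%N -> sub_sigma (F i)) ->
  (forall i, (i < n)%N -> F i `<=` F i.+1) ->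
  (forall i, (1 <= i <= n)%N -> G_measurable (F i) (xi i)) ->
  (forall i, (1 <= i <= n)%N -> P.-integrable setT (EFin \o xi i)) ->
  (forall i, (1 <= i <= n)%N ->
     exists g, cond_exp P (F i.-1) (xi i) g /\ {ae P, forall x, g x <= 0}) ->
  1 < beta < 2 ->
  (forall i, (1 <= i <= n)%N ->
     (\int[P]_x (`|xi i x| `^ beta)%:E < +oo)%E) ->
  forall i, (1 <= i <= n)%N -> forall lam : R, 0 < lam ->
  forall g h : T -> R,
    cond_exp P (F i.-1)
      (fun x => expR (lam * xi i x - lam `^ beta * (Num.max (xi i x) 0) `^ beta)) g ->
    cond_exp P (F i.-1) (fun x => (- Num.min (xi i x) 0) `^ beta) h ->
    {ae P, forall x, g x <= expR (lam `^ beta * h x)}.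
Proof.
(* Only the step from F (i-1) to F i matters; measurability of xi i already
   follows from its integrability. *)
move=> _ sigmaF _ _ intxi supmart /andP[b1 b2] momxi i i1n lam lam0 g h.
have [g1 [cond_xi g1_le0]] := supmart i i1n.
have sigma_prev : sub_sigma (F i.-1).
  by apply: sigmaF; case/andP: i1n => _; exact: leq_trans (leq_pred i).
have b12 : 1 <= beta <= 2 by rewrite !ltW.
exact: (cond_exp_expR_le P (F i.-1) (xi i) g1 beta lam sigma_prev (intxi i i1n)
          cond_xi g1_le0 b12 (ltW lam0) (momxi i i1n)).
Qed.
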